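(* Let $\Theta(t;\lambda)$ ($t\in\mathbb{R}$, $\lambda\ge0$) be a threshold function, i.e. for every $\lambda\ge0$: (1) $\Theta(-t;\lambda)=-\Theta(t;\lambda)$; (2) $\Theta(t;\lambda)\le\Theta(t';\lambda)$ for $t\le t'$; (3) $\lim_{t\to\infty}\Theta(t;\lambda)=\infty$; (4) $0\le\Theta(t;\lambda)\le t$ for $0\le t<\infty$. For $u\ge0$ define $\Theta^{-1}(u;\lambda)=\sup\{t:\Theta(t;\lambda)\le u\}$, $s(u;\lambda)=\Theta^{-1}(u;\lambda)-u$, and $P_\Theta(\theta;\lambda)=\int_0^{|\theta|}s(u;\lambda)\,du$. Let $P(\cdot;\cdot)$ be any function such that $P(\theta;\lambda)-P(0;\lambda)=P_\Theta(\theta;\lambda)+q(\theta;\lambda)$, where $q(\cdot;\lambda)\ge0$ and $q(\Theta(\theta;\lambda);\lambda)=0$ for all $\theta$. Let $\mathbf{X}\in\mathbb{R}^{n\times p}$ have full column rank $p$, $\mathbf{y}\in\mathbb{R}^n$, $\lambda_1,\dots,\lambda_n\ge0$, and define $$f_P(\boldsymbol\beta,\boldsymbol\gamma)=\frac12\|\mathbf{y}-\mathbf{X}\boldsymbol\beta-\boldsymbol\gamma\|_2^2+\sum_{i=1}^n P(\gamma_i;\lambda_i).$$ Consider the $\Theta$-IPOD iteration: starting from any $\boldsymbol\gamma^{(0)}\in\mathbb{R}^n$, for $j\ge0$ set $\boldsymbol\beta^{(j)}=(\mathbf{X}^\top\mathbf{X})^{-1}\mathbf{X}^\top(\mathbf{y}-\boldsymbol\gamma^{(j)})$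 and $\gamma^{(j+1)}_i=\Theta(y_i-\mathbf{x}_i^\top\boldsymbol\beta^{(j)};\lambda_i)$ for each $i$. Then for every $j\ge0$, $$f_P(\boldsymbol\beta^{(j)},\boldsymbol\gamma^{(j)})\ge f_P(\boldsymbol\beta^{(j)},\boldsymbol\gamma^{(j+1)})\ge f_P(\boldsymbol\beta^{(j+1)},\boldsymbol\gamma^{(j+1)}).$$
   Context: $\mathbf{x}_i^\top$ denotes the $i$-th row of $\mathbf{X}$. The iteration alternates an ordinary least squares fit of $\mathbf{y}-\boldsymbol\gamma$ on $\mathbf{X}$ with componentwise thresholding of the residuals. *)

From HB Require Import structures.
From mathcomp Require Import all_boot all_order all_algebra.
From mathcomp Require Import all_classical all_reals all_analysis.
Set Implicit Arguments. Unset Strict Implicit. Unset Printing Implicit Defensive.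
Import Order.TTheory GRing.Theory Num.Theory.
Import numFieldNormedType.Exports.
Local Open Scope classical_set_scope.
Local Open Scope ring_scope.

Section Defs.
Variable R : realType.

Definition is_threshold (Theta : R -> R -> R) : Prop :=
  forall l : R, 0 <= l ->
    [/\ (forall t, Theta (- t) l = - Theta t l),
        (forall t t', t <= t' -> Theta t l <= Theta t' l),
        (fun t => Theta t l) @ +oo --> +oo
      & (forall t, 0 <= t -> 0 <= Theta t l <= t)].

Definition Theta_inv (Theta : R -> R -> R) (u l : R) : R :=
  sup [set t | Theta t l <= u].

Definition s_fun (Theta : R -> R -> R) (u l : R) : R := Theta_inv Theta u l - u.

Definition P_Theta (Theta : R -> R -> R) (theta l : R) : R :=
  Rintegral lebesgue_measure `[0, `|theta|] (fun u => s_fun Theta u l).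

Variables (n p : nat).

Definition f_P (P : R -> R -> R) (X : 'M[R]_(n, p)) (y : 'cV[R]_n)
    (lam : 'I_n -> R) (beta : 'cV[R]_p) (gam : 'cV[R]_n) : R :=
  2^-1 * \sum_(i < n) ((y - X *m beta - gam) i 0) ^+ 2
  + \sum_(i < n) P (gam i 0) (lam i).

Definition ols_beta (X : 'M[R]_(n, p)) (y gam : 'cV[R]_n) : 'cV[R]_p :=
  invmx (X^T *m X) *m (X^T *m (y - gam)).

Fixpoint ipod_gamma (Theta : R -> R -> R) (X : 'M[R]_(n, p)) (y : 'cV[R]_n)
    (lam : 'I_n -> R) (gam0 : 'cV[R]_n) (j : nat) : 'cV[R]_n :=
  match j with
  | 0%N => gam0
  | j'.+1 =>
      let b := ols_beta X y (ipod_gamma Theta X y lam gam0 j') in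
      \col_i Theta ((y - X *m b) i 0) (lam i)
  end.

Definition ipod_beta (Theta : R -> R -> R) (X : 'M[R]_(n, p)) (y : 'cV[R]_n)
    (lam : 'I_n -> R) (gam0 : 'cV[R]_n) (j : nat) : 'cV[R]_p :=
  ols_beta X y (ipod_gamma Theta X y lam gam0 j).

End Defs.

(* Each half-step of Theta-IPOD minimises f_P exactly in the block it updates.
   For beta this is least squares.  For gamma the objective splits into the
   scalar problems min_g 1/2 (r - g)^2 + P(g; lambda), and for g >= 0
     1/2 (r - g)^2 + P_Theta(g) = int_0^g (Theta^{-1}(u) - r) du + 1/2 r^2,
   whose integrand is <= 0 below Theta(r) and >= 0 above it, so g = Theta(r)
   is a minimiser; oddness of Theta reduces r, g to the nonnegative case, and
   the extra term q >= 0 of P vanishes at Theta(r). *)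
From HB Require Import structures.
From mathcomp Require Import all_boot all_order all_algebra.
From mathcomp Require Import all_classical all_reals all_analysis.
From mathcomp Require Import ring lra.
Set Implicit Arguments. Unset Strict Implicit. Unset Printing Implicit Defensive.
Import Order.TTheory GRing.Theory Num.Theory numFieldNormedType.Exports.
Local Open Scope classical_set_scope.
Local Open Scope ring_scope.

Section real_integrals.
Variable R : realType.
Notation mu := (@lebesgue_measure R).

Lemma is_derive_half_sqr_sub (c x : R) :
  is_derive x 1 (fun u => 2^-1 * (u - c) ^+ 2) (x - c).
Proof.
have dsub : is_derive x 1 (@id R - cst c) (1 - 0) by apply: is_deriveB.
have := is_deriveZ (2^-1) (is_deriveX 2 dsub).
rewrite subr0 expr1 scalerA mulrA mulVf ?pnatr_eq0 // mul1r.
by have -> : ((@id R - cst c) x)%:A = x - c by rewrite /= !fctE; exact: mulr1.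
Qed.

Lemma continuous_itv_integrable (g : R -> R) a b :
  continuous g -> mu.-integrable `[a, b] (EFin \o g).
Proof.
move=> cg; apply: continuous_compact_integrable; first exact: segment_compact.
exact: continuous_subspaceT.
Qed.

Lemma Rintegral_sub_cst (a b c : R) : a <= b ->
  \int[mu]_(u in `[a, b]) (u - c) = 2^-1 * (b - c) ^+ 2 - 2^-1 * (a - c) ^+ 2.
Proof.
rewrite le_eqVlt => /predU1P[<-|ab]; first by rewrite set_itv1 Rintegral_set1 subrr.
have dF x := is_derive_half_sqr_sub c x.
have cF x : {for x, continuous (fun u => 2^-1 * (u - c) ^+ 2)}.
  apply/differentiable_continuous/derivable1_diffP.
  exact: (@ex_derive _ _ _ _ _ _ _ (dF x)).
rewrite /Rintegral (continuous_FTC2 (F := fun u => 2^-1 * (u - c) ^+ 2) ab) //=.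
- apply: continuous_subspaceT => x.
  by apply: cvgB; [exact: cvg_id | exact: cvg_cst].
- split; first by move=> x _; exact: (@ex_derive _ _ _ _ _ _ _ (dF x)).
  + exact/cvg_at_right_filter/cF.
  + exact/cvg_at_left_filter/cF.
- by move=> x _; rewrite derive1E (@derive_val _ _ _ _ _ _ _ (dF x)).
Qed.

End real_integrals.

Section threshold.
Variables (R : realType) (Theta : R -> R -> R) (l : R).
Hypotheses (Theta_odd : forall t, Theta (- t) l = - Theta t l)
  (Theta_nondecr : forall t t', t <= t' -> Theta t l <= Theta t' l)
  (Theta_cvgy : (fun t => Theta t l) @ +oo --> +oo)
  (Theta_bound : forall t, 0 <= t -> 0 <= Theta t l <= t).
Notation mu := (@lebesgue_measure R).
Local Notation Tinv u := (Theta_inv Theta u l).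

Lemma Theta0 : Theta 0 l = 0.
Proof. by have /andP[h0 h1] := Theta_bound (lexx 0); apply/eqP; rewrite eq_le h0 h1. Qed.

Lemma Theta_le_has_ubound u : has_ubound [set t | Theta t l <= u].
Proof.
have [M [_ HM]] := proj1 (cvgryPgt (fun t => Theta t l)) Theta_cvgy u.
exists M => t /= Ht; rewrite leNgt; apply/negP => /HM.
by rewrite ltNge Ht.
Qed.

Lemma Theta_le_neq0 u : 0 <= u -> [set t | Theta t l <= u] !=set0.
Proof. by move=> u0; exists 0; rewrite /= Theta0. Qed.

Lemma Theta_inv_ge r u : Theta r l <= u -> r <= Tinv u.
Proof. exact/ub_le_sup/Theta_le_has_ubound. Qed.

Lemma Theta_inv_le r u : 0 <= u -> u < Theta r l -> Tinv u <= r.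
Proof.
move=> u0 ur; apply: ge_sup; first exact: Theta_le_neq0.
move=> t /= tu; rewrite leNgt; apply/negP => rt.
by have := le_lt_trans (Theta_nondecr (ltW rt)) (le_lt_trans tu ur); rewrite ltxx.
Qed.

Lemma Theta_inv_nondecr u v : 0 <= u -> u <= v -> Tinv u <= Tinv v.
Proof.
move=> u0 uv; apply: ge_sup; first exact: Theta_le_neq0.
by move=> t /= tu; apply: Theta_inv_ge; exact: le_trans tu uv.
Qed.

Lemma integrable_Theta_inv b : 0 <= b -> mu.-integrable `[0, b] (EFin \o (fun u => Tinv u)).
Proof.
move=> b0; apply: measurable_bounded_integrable => //.
- have := @lebesgue_measure_itv R `[0, b]%R; rewrite /= => ->.
  by case: ifP => _; rewrite ?ltry.
- (* Theta_inv is monotone only on [0, +oo[; clamping at 0 makes it globally so. *)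
  refine (eq_measurable_fun (fun u : R => Tinv (Num.max u 0)) _ _).
    by move=> u /set_mem; rewrite /= in_itv /= => /andP[u0 _]; rewrite max_l.
  apply: measurable_realfun.nondecreasing_measurable => // x z xz.
  apply: Theta_inv_nondecr; first by rewrite le_max lexx orbT.
  by rewrite ge_max !le_max xz lexx !orbT.
- exists (`|Tinv 0| + `|Tinv b|); split; first by rewrite num_real.
  move=> M KM x /=; rewrite in_itv /= => /andP[x0 xb].
  apply: le_trans (ltW KM).
  have := Theta_inv_nondecr (lexx 0) x0; have := Theta_inv_nondecr x0 xb.
  have := ler_norm (Tinv 0); have := ler_norm (- Tinv 0).
  have := ler_norm (Tinv b); have := ler_norm (- Tinv b).
  rewrite !normrN ler_norml; lra.
Qed.

Lemma integrable_Theta_inv_sub (g : R -> R) b : continuous g -> 0 <= b ->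
  mu.-integrable `[0, b] (EFin \o (fun u => Tinv u - g u)).
Proof.
move=> cg b0.
exact: (integrableB _ (integrable_Theta_inv b0) (continuous_itv_integrable _ _ cg)).
Qed.

Lemma P_Theta_normr g : P_Theta Theta `|g| l = P_Theta Theta g l.
Proof. by rewrite /P_Theta normr_id. Qed.

Lemma P_ThetaN g : P_Theta Theta (- g) l = P_Theta Theta g l.
Proof. by rewrite /P_Theta normrN. Qed.

Lemma half_sqr_sub_add_P_Theta r g : 0 <= g ->
  2^-1 * (r - g) ^+ 2 + P_Theta Theta g l =
  \int[mu]_(u in `[0, g]) (Tinv u - r) + 2^-1 * r ^+ 2.
Proof.
move=> g0; rewrite /P_Theta /s_fun ger0_norm //.
have -> : \int[mu]_(u in `[0, g]) (Tinv u - r) =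
          \int[mu]_(u in `[0, g]) ((Tinv u - u) + (u - r)).
  by apply: eq_Rintegral => u _; rewrite subrKA.
rewrite [in RHS]RintegralD //.
- by rewrite Rintegral_sub_cst //; ring.
- by apply: (integrable_Theta_inv_sub _ g0) => x; exact: cvg_id.
- by apply: continuous_itv_integrable => x; apply: cvgB; [exact: cvg_id | exact: cvg_cst].
Qed.

(* The integrand is >= 0 to the right of Theta(r) and <= 0 to its left. *)
Lemma Rintegral_Theta_inv_sub_min r g : 0 <= r -> 0 <= g ->
  \int[mu]_(u in `[0, Theta r l]) (Tinv u - r) <=
  \int[mu]_(u in `[0, g]) (Tinv u - r).
Proof.
move=> r0 g0; have /andP[Tr0 _] := Theta_bound r0.
have iphi b : 0 <= b -> mu.-integrable `[0, b] (EFin \o (fun u => Tinv u - r)).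
  by move=> b0; apply: integrable_Theta_inv_sub b0 => x; exact: cvg_cst.
have [Trg|gTr] := leP (Theta r l) g.
  rewrite -subr_ge0 (Rintegral_itvB (iphi _ g0)) ?bnd_simp //.
  apply: Rintegral_ge0 => u /=; rewrite in_itv /= => /andP[Tru _].
  by rewrite subr_ge0; apply: Theta_inv_ge; exact: ltW.
rewrite -subr_le0 (Rintegral_itvB (iphi _ Tr0)) ?bnd_simp //; last exact: ltW.
have iphi_gTr : mu.-integrable `]g, Theta r l[ (EFin \o (fun u => Tinv u - r)).
  apply: integrableS (iphi _ Tr0) => // u /=; rewrite !in_itv /= => /andP[gu uTr].
  by rewrite (le_trans g0 (ltW gu)) ltW.
rewrite -Rintegral_itv_bndo_bndc //.
apply: (@le_trans _ _ (\int[mu]_(u in `]g, Theta r l[) (0 : R))).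
  apply: le_Rintegral => //; first exact: integrable0.
  move=> u /=; rewrite in_itv /= => /andP[gu uTr].
  by rewrite subr_le0; apply: Theta_inv_le => //; exact: le_trans g0 (ltW gu).
by rewrite Rintegral_cst // mul0r.
Qed.

Lemma threshold_argmin_nonneg r g : 0 <= r ->
  2^-1 * (r - Theta r l) ^+ 2 + P_Theta Theta (Theta r l) l <=
  2^-1 * (r - g) ^+ 2 + P_Theta Theta g l.
Proof.
move=> r0; have /andP[Tr0 _] := Theta_bound r0.
apply: (@le_trans _ _ (2^-1 * (r - `|g|) ^+ 2 + P_Theta Theta `|g| l)).
  rewrite !half_sqr_sub_add_P_Theta // lerD2r.
  exact: Rintegral_Theta_inv_sub_min.
rewrite P_Theta_normr lerD2r ler_wpM2l ?invr_ge0 ?ler0n //.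
have : 0 <= r * (`|g| - g) by rewrite mulr_ge0 // subr_ge0 ler_norm.
have := real_normK (num_real g); nra.
Qed.

Lemma threshold_argmin r g :
  2^-1 * (r - Theta r l) ^+ 2 + P_Theta Theta (Theta r l) l <=
  2^-1 * (r - g) ^+ 2 + P_Theta Theta g l.
Proof.
have [r0|r0] := leP 0 r; first exact: threshold_argmin_nonneg.
have /(threshold_argmin_nonneg (- g)) : 0 <= - r by rewrite oppr_ge0 ltW.
have -> : Theta r l = - Theta (- r) l by rewrite Theta_odd opprK.
rewrite !P_ThetaN; lra.
Qed.

Lemma threshold_argmin_penalty (P q : R -> R -> R) r g :
  (forall theta, P theta l - P 0 l = P_Theta Theta theta l + q theta l) ->
  0 <= q g l -> q (Theta r l) l = 0 ->
  2^-1 * (r - Theta r l) ^+ 2 + P (Theta r l) l <= 2^-1 * (r - g) ^+ 2 + P g l.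
Proof.
move=> hP qg0 qTr0; have := threshold_argmin r g.
by have := hP (Theta r l); have := hP g; rewrite qTr0; lra.
Qed.

End threshold.

Section least_squares.
Variables (R : realType) (n p : nat).

Lemma trmx_mul_self_eq0 (w : 'cV[R]_n) : w^T *m w = 0 -> w = 0.
Proof.
move=> /(congr1 (fun M : 'M[R]_1 => M 0 0)); rewrite [RHS]mxE mxE.
under eq_bigr do rewrite mxE -expr2.
move=> /psumr_eq0P sq0; apply/matrixP => i j; rewrite (ord1 j) [RHS]mxE.
by apply/eqP; rewrite -sqrf_eq0 sq0 // => k _; exact: sqr_ge0.
Qed.

Lemma trmx_mul_self_unitmx (X : 'M[R]_(n, p)) : \rank X = p -> X^T *m X \in unitmx.
Proof.
move=> rkX; rewrite -row_free_unit; apply: inj_row_free => v vXX0.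
have /trmx_mul_self_eq0 Xv0 : (X *m v^T)^T *m (X *m v^T) = 0.
  by rewrite trmx_mul trmxK -mulmxA (mulmxA X^T) mulmxA vXX0 mul0mx.
have XTfree : row_free X^T by rewrite /row_free mxrank_tr rkX.
by apply/eqP; rewrite -(mulmx_free_eq0 _ XTfree) -[v]trmxK -trmx_mul Xv0 trmx0.
Qed.

Lemma ols_beta_normal_eq (X : 'M[R]_(n, p)) (y gam : 'cV[R]_n) : \rank X = p ->
  X^T *m (y - gam - X *m ols_beta X y gam) = 0.
Proof.
move=> rkX; rewrite /ols_beta mulmxBr !mulmxA mulmxV ?trmx_mul_self_unitmx //.
by rewrite mul1mx subrr.
Qed.

Lemma ols_beta_min (X : 'M[R]_(n, p)) (y gam : 'cV[R]_n) (b : 'cV[R]_p) :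
  \rank X = p ->
  \sum_i ((y - X *m ols_beta X y gam - gam) i 0) ^+ 2 <=
  \sum_i ((y - X *m b - gam) i 0) ^+ 2.
Proof.
move=> rkX; set e := y - gam - X *m ols_beta X y gam.
set d := X *m (ols_beta X y gam - b).
have -> : y - X *m ols_beta X y gam - gam = e by rewrite /e addrAC.
have -> : y - X *m b - gam = e + d by rewrite /e /d mulmxBr addrA subrK addrAC.
have ed0 : \sum_i e i 0 * d i 0 = 0.
  have -> : \sum_i e i 0 * d i 0 = (e^T *m d) 0 0.
    by rewrite [RHS]mxE; apply: eq_bigr => i _; rewrite [e^T _ _]mxE.
  by rewrite /d mulmxA -[e^T *m X]trmxK trmx_mul trmxK ols_beta_normal_eq // trmx0 mul0mx mxE.
rewrite -subr_ge0.
have -> : \sum_i ((e + d) i 0) ^+ 2 - \sum_i (e i 0) ^+ 2 =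
          2 * \sum_i e i 0 * d i 0 + \sum_i (d i 0) ^+ 2.
  rewrite mulr_sumr -sumrB -big_split; apply: eq_bigr => i _; rewrite [(e + d) i 0]mxE /=; ring.
by rewrite ed0 mulr0 add0r sumr_ge0 // => i _; exact: sqr_ge0.
Qed.

End least_squares.

Theorem theorem1 (R : realType) (n p : nat)
  (Theta : R -> R -> R) (P q : R -> R -> R)
  (X : 'M[R]_(n, p)) (y : 'cV[R]_n) (lam : 'I_n -> R) (gam0 : 'cV[R]_n)
  (hTheta : is_threshold Theta)
  (hq_nonneg : forall l theta, 0 <= l -> 0 <= q theta l)
  (hq_zero : forall l theta, 0 <= l -> q (Theta theta l) l = 0)
  (hP : forall l theta, 0 <= l ->
          P theta l - P 0 l = P_Theta Theta theta l + q theta l)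
  (hX : \rank X = p)
  (hlam : forall i, 0 <= lam i) :
  forall j : nat,
    f_P P X y lam (ipod_beta Theta X y lam gam0 j) (ipod_gamma Theta X y lam gam0 j)
      >= f_P P X y lam (ipod_beta Theta X y lam gam0 j) (ipod_gamma Theta X y lam gam0 j.+1)
    /\
    f_P P X y lam (ipod_beta Theta X y lam gam0 j) (ipod_gamma Theta X y lam gam0 j.+1)
      >= f_P P X y lam (ipod_beta Theta X y lam gam0 j.+1) (ipod_gamma Theta X y lam gam0 j.+1).
Proof.
move=> j; set b := ipod_beta _ _ _ _ _ j.
split; last first.
  by rewrite /f_P lerD2r ler_wpM2l ?invr_ge0 ?ler0n //; exact: ols_beta_min.
have -> : ipod_gamma Theta X y lam gam0 j.+1 =
          \col_i Theta ((y - X *m b) i 0) (lam i) by [].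
rewrite /f_P !mulr_sumr -!big_split /=; apply: ler_sum => i _.
have [oddT nondecrT cvgyT boundT] := hTheta _ (hlam i).
rewrite !mxE; apply: (threshold_argmin_penalty oddT nondecrT cvgyT boundT).
- by move=> theta; exact: hP.
- exact: hq_nonneg.
- exact: hq_zero.
Qed.
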